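(* For all $r\ge2$ and $n\ge1$, $\ell^\ast(\mathcal{B}_{(r,n)};z)$ is $\gamma$-nonnegative: there are nonnegative numbers $\gamma_i$ with $\ell^\ast(\mathcal{B}_{(r,n)};z)=\sum_{i=0}^{\lfloor (n+1)/2\rfloor}\gamma_i z^i(1+z)^{n+1-2i}$.
   Context: For $r\ge2$, $n\ge1$, $\mathcal{B}_{(r,n)}:=\operatorname{conv}\bigl(e^{(1)},\ldots,e^{(n)},-\sum_{i=1}^n(r-1)r^{i-1}e^{(i)}\bigr)\subset\mathbb{R}^n$. For a lattice simplex $\Delta=\operatorname{conv}(v^{(0)},\ldots,v^{(d)})\subset\mathbb{R}^n$, $\ell^\ast(\Delta;z):=\sum_{x\in\Pi^\circ_\Delta\cap\mathbb{Z}^{n+1}}z^{x_{n+1}}$, where $\Pi^\circ_\Delta:=\{\sum_{i=0}^d\lambda_i(v^{(i)},1):0<\lambda_i<1\}$; for a $d$-simplex it is symmetric with respect to $d+1$. *)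

From HB Require Import structures.
From mathcomp Require Import all_boot all_order all_algebra.
Set Implicit Arguments. Unset Strict Implicit. Unset Printing Implicit Defensive.
Import Order.TTheory GRing.Theory Num.Theory.
Local Open Scope ring_scope.

Definition lift_pt (n : nat) (v : 'rV[int]_n) : 'rV[int]_(n.+1) :=
  \row_(j < n.+1) (if unlift ord_max j is Some j' then v 0 j' else 1).

(* x lies in the open parallelepiped
   Pi°_Delta = { sum_i lambda_i (v^(i),1) : 0 < lambda_i < 1 }
   of the lattice simplex Delta = conv(V 0, ..., V d) in R^n.
   (Coefficients lambda_i are taken rational; for lattice points of the
   parallelepiped of a simplex they are automatically rational.) *)
Definition in_open_pp (n d : nat) (V : 'I_d.+1 -> 'rV[int]_n)
    (x : 'rV[int]_(n.+1)) : Prop :=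
  exists lam : 'I_d.+1 -> rat,
    (forall i, 0 < lam i < 1) /\
    map_mx (fun a : int => a%:~R : rat) x =
      \sum_(i < d.+1) lam i *: map_mx (fun a : int => a%:~R : rat) (lift_pt (V i)).

(* p is ell^*(Delta; z): the set Pi°_Delta ∩ Z^{n+1} is finite, enumerated
   without repetition by s, and p = sum_{x in s} z^{x_{n+1}}. *)
Definition lstar_is (n d : nat) (V : 'I_d.+1 -> 'rV[int]_n) (p : {poly rat}) : Prop :=
  exists s : seq 'rV[int]_(n.+1),
    [/\ uniq s,
        (forall x, x \in s <-> in_open_pp V x),
        (forall x, x \in s -> 0 <= x 0 ord_max) &
        p = \sum_(x <- s) 'X^(absz (x 0 ord_max))].

Definition Bvert (r n : nat) (i : 'I_n.+1) : 'rV[int]_n :=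
  \row_(j < n) (if i == ord0 then - ((r - 1) * r ^ j)%:Z
                else ((i : nat) == j.+1)%:Z).

Definition gamma_nonneg (n : nat) (p : {poly rat}) : Prop :=
  exists gamma : 'I_((n.+1)./2).+1 -> rat,
    (forall i, 0 <= gamma i) /\
    p = \sum_(i < ((n.+1)./2).+1)
          gamma i *: ('X^i * (1 + 'X) ^+ (n.+1 - 2 * i)).

Arguments Bvert r n i : clear implicits.
Arguments gamma_nonneg n p : clear implicits.

From HB Require Import structures.
From mathcomp Require Import all_boot all_order all_algebra.
From mathcomp Require Import ring zify.
Set Implicit Arguments. Unset Strict Implicit. Unset Printing Implicit Defensive.
Import Order.TTheory GRing.Theory Num.Theory.
Local Open Scope ring_scope.

(* A lattice point of the open parallelepiped of B_(r,n) is determined by an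
   integer 0 < k < r^n not divisible by r: its barycentric coordinates are k/r^n
   and the fractional parts of k (r-1) r^j / r^n, and its height is
   k - sum_j floor(k (r-1) r^j / r^n).  Grouping the points by
   t = floor((r-1) k / r^n) < r-1 gives polynomials F_n(t) with F_1(t) = z, and
   splitting off the leading base-r digit of k yields the recursion
   F_(n+1)(t) = sum_(s >= t) F_n(s) + z sum_(s <= t) F_n(s).  This recursion
   preserves a splitting of the sequence (F_n(t))_t into palindromic
   gamma-nonnegative parts, which makes the total sum ell^* gamma-nonnegative. *)

Definition gamma_pos (c : nat) (p : {poly rat}) : Prop :=
  exists g : nat -> rat, (forall i, 0 <= g i) /\
    p = \sum_(i < (c./2).+1) g i *: ('X^i * (1 + 'X) ^+ (c - 2 * i)).

Lemma gamma_pos0 c : gamma_pos c 0.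
Proof. by exists (fun=> 0); split=> //; rewrite big1 // => i _; rewrite scale0r. Qed.

Lemma gamma_pos1 : gamma_pos 0 1.
Proof. by exists (fun=> 1); split=> //; rewrite big_ord1 expr0 mulr1 scale1r. Qed.

Lemma gamma_posD c p q : gamma_pos c p -> gamma_pos c q -> gamma_pos c (p + q).
Proof.
move=> [g [g0 ->]] [h [h0 ->]]; exists (fun i => g i + h i); split.
  by move=> i; rewrite addr_ge0.
by rewrite -big_split; apply: eq_bigr => i _; rewrite scalerDl.
Qed.

Lemma gamma_posZ c a p : 0 <= a -> gamma_pos c p -> gamma_pos c (a *: p).
Proof.
move=> a0 [g [g0 ->]]; exists (fun i => a * g i); split.
  by move=> i; rewrite mulr_ge0.
by rewrite scaler_sumr; apply: eq_bigr => i _; rewrite scalerA.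
Qed.

Lemma gamma_pos_sum c (I : Type) (s : seq I) (P : pred I) (F : I -> {poly rat}) :
  (forall i, P i -> gamma_pos c (F i)) -> gamma_pos c (\sum_(i <- s | P i) F i).
Proof. by apply: big_ind; [apply: gamma_pos0 | apply: gamma_posD]. Qed.

Lemma gamma_pos_mulX c p : gamma_pos c p -> gamma_pos c.+2 ('X * p).
Proof.
move=> [g [g0 ->]]; exists (fun i => if i is i'.+1 then g i' else 0); split.
  by case.
rewrite [RHS]big_ord_recl scale0r add0r mulr_sumr; apply: eq_bigr => i _.
by rewrite lift0 -scalerAr exprS mulrA mulnS add2n !subSS.
Qed.

Lemma gamma_pos_mul1X c p : gamma_pos c p -> gamma_pos c.+1 ((1 + 'X) * p).
Proof.
move=> [g [g0 ->]]; exists (fun i => if (i <= c./2)%N then g i else 0); split.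
  by move=> i; case: ifP.
have le_half : ((c./2).+1 <= (c.+1./2).+1)%N.
  by rewrite ltnS; case: (odd c) (odd_double_half c) => /= <-; lia.
rewrite mulr_sumr (big_ord_widen _
  (fun i => (1 + 'X) * (g i *: ('X^i * (1 + 'X) ^+ (c - 2 * i)))) le_half).
rewrite big_mkcond; apply: eq_bigr => i _.
case: ifP => [i_le|i_gt]; last by rewrite ifF ?scale0r //; apply/negbTE; rewrite -ltnNge.
rewrite ifT // -scalerAr mulrCA -exprS; congr (_ *: (_ * _ ^+ _)).
have := odd_double_half c; lia.
Qed.

Definition gamma_pos_pred (c : nat) (p : {poly rat}) : Prop :=
  if c is c'.+1 then gamma_pos c' p else p = 0.

Lemma gamma_pos_predD c p q :
  gamma_pos_pred c p -> gamma_pos_pred c q -> gamma_pos_pred c (p + q).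
Proof. by case: c => [/= -> ->|c]; [rewrite addr0 | apply: gamma_posD]. Qed.

Lemma gamma_pos_pred_sum c (I : Type) (s : seq I) (P : pred I) (F : I -> {poly rat}) :
  (forall i, P i -> gamma_pos_pred c (F i)) -> gamma_pos_pred c (\sum_(i <- s | P i) F i).
Proof.
apply: big_ind; last exact: gamma_pos_predD.
by case: c => //= c; apply: gamma_pos0.
Qed.

Lemma gamma_pos_pred_mul1X c p : gamma_pos_pred c p -> gamma_pos c ((1 + 'X) * p).
Proof.
by case: c => [/= ->|c]; [rewrite mulr0; apply: gamma_pos0 | apply: gamma_pos_mul1X].
Qed.

Lemma gamma_pos_pred_mulX c p : gamma_pos_pred c p -> gamma_pos c.+1 ('X * p).
Proof.
by case: c => [/= ->|c]; [rewrite mulr0; apply: gamma_pos0 | apply: gamma_pos_mulX].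
Qed.

Lemma sum_nat_rev_suffix (V : nmodType) (F : nat -> V) m j : (j <= m)%N ->
  \sum_((m - j)%N <= i < m) F i = \sum_(0 <= i < j) F (m.-1 - i)%N.
Proof.
move=> le_jm; rewrite -{1}(add0n (m - j)%N) big_addn (subKn le_jm) big_nat_rev.
by apply: eq_big_nat => i /andP [_ lt_ij]; congr F; lia.
Qed.

(* A sequence [W 0, ..., W (m-1)] is balanced of degree c when it splits as
   [W j = A j + B j] on the first half and [W j = A j + z B j] on the mirrored
   second half, with [A], [B] palindromic; then W j + W (m-1-j) = 2 A j + (1+z) B j,
   so sums over symmetric index ranges are gamma-nonnegative of center c/2. *)
Definition balanced_decomp (m c : nat) (W A B : nat -> {poly rat}) : Prop :=
  forall j, (j < m)%N -> [/\ gamma_pos c (A j), gamma_pos_pred c (B j),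
    A (m.-1 - j)%N = A j /\ B (m.-1 - j)%N = B j,
    ((2 * j).+1 = m -> B j = 0) &
    W j = A j + (if ((2 * j).+1 < m)%N then B j else 'X * B j)].

Definition balanced (m c : nat) (W : nat -> {poly rat}) : Prop :=
  exists A B, balanced_decomp m c W A B.

Definition next_slice (m : nat) (W : nat -> {poly rat}) (t : nat) : {poly rat} :=
  \sum_(t <= s < m) W s + 'X * \sum_(0 <= s < t.+1) W s.

Section BalancedStep.
Variables (m c : nat) (W A B : nat -> {poly rat}).
Hypothesis hWAB : balanced_decomp m c W A B.

Let alpha j := \sum_(0 <= i < j) A i.
Let beta j := \sum_(0 <= i < j) B i.

Lemma balanced_low j : ((2 * j).+1 <= m)%N -> W j = A j + B j.
Proof.
move=> hj; have /hWAB [_ _ _ B_mid ->] : (j < m)%N by lia.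
by case: ltnP => // hm; rewrite B_mid ?mulr0 //; lia.
Qed.

Lemma balanced_high j : ((2 * j).+1 < m)%N -> W (m.-1 - j)%N = A j + 'X * B j.
Proof.
move=> hj; have /hWAB [_ _ [symA symB] _ _] : (j < m)%N by lia.
have /hWAB [_ _ _ _ ->] : (m.-1 - j < m)%N by lia.
by rewrite symA symB ifF //; apply/negbTE; lia.
Qed.

Lemma balanced_pair j : (j < m)%N ->
  W j + W (m.-1 - j)%N = A j + A j + (1 + 'X) * B j.
Proof.
move=> hj; case: (ltngtP (2 * j).+1 m) => hm.
- by rewrite balanced_low ?balanced_high //; [ring | lia].
- have [_ _ [symA symB] _ _] := hWAB hj.
  rewrite {1}(_ : j = m.-1 - (m.-1 - j))%N; last by lia.
  by rewrite balanced_high ?balanced_low ?symA ?symB; [ring | lia | lia].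
- have [_ _ _ B_mid _] := hWAB hj.
  have -> : (m.-1 - j = j)%N by lia.
  by rewrite balanced_low ?B_mid //; [ring | lia].
Qed.

Lemma gamma_pos_sum_sym lo hi : (lo + hi = m)%N ->
  gamma_pos c (\sum_(lo <= i < hi) W i).
Proof.
move=> hm.
have pairs : \sum_(lo <= i < hi) (W i + W (m.-1 - i)%N) =
    \sum_(lo <= i < hi) (A i + A i + (1 + 'X) * B i).
  by apply: eq_big_nat => i /andP [_ hi']; rewrite balanced_pair //; lia.
have mirror : \sum_(lo <= i < hi) W (m.-1 - i)%N = \sum_(lo <= i < hi) W i.
  by rewrite big_nat_rev; apply: eq_big_nat => i /andP [_ hi']; congr W; lia.
have -> : \sum_(lo <= i < hi) W i =
    2%:R^-1 *: \sum_(lo <= i < hi) (A i + A i + (1 + 'X) * B i).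
  rewrite -pairs big_split /= mirror -mulr2n -scaler_nat scalerA.
  by rewrite mulVf ?scale1r // pnatr_eq0.
apply: gamma_posZ; first by rewrite invr_ge0 ler0n.
rewrite big_nat_cond; apply: gamma_pos_sum => i /andP [/andP [_ hi'] _].
have /hWAB [gA gB _ _ _] : (i < m)%N by lia.
by apply: gamma_posD; [apply: gamma_posD | apply: gamma_pos_pred_mul1X].
Qed.

Lemma sum_prefix j : ((2 * j).+1 <= m)%N -> \sum_(0 <= i < j) W i = alpha j + beta j.
Proof.
move=> hj; rewrite -big_split; apply: eq_big_nat => i hi.
by rewrite balanced_low //; lia.
Qed.

Lemma sum_suffix j : ((2 * j).+1 <= m)%N ->
  \sum_((m - j)%N <= i < m) W i = alpha j + 'X * beta j.
Proof.
move=> hj; rewrite sum_nat_rev_suffix; last by lia.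
rewrite mulr_sumr -big_split; apply: eq_big_nat => i hi.
by rewrite balanced_high //; lia.
Qed.

Lemma gamma_pos_alpha j : (j <= m)%N -> gamma_pos c (alpha j).
Proof.
move=> hj; rewrite /alpha big_nat_cond; apply: gamma_pos_sum => i /andP [/andP [_ hi] _].
by have /hWAB [] : (i < m)%N by lia.
Qed.

Lemma gamma_pos_pred_beta j : (j <= m)%N -> gamma_pos_pred c (beta j).
Proof.
move=> hj; rewrite /beta big_nat_cond; apply: gamma_pos_pred_sum => i /andP [/andP [_ hi] _].
by have /hWAB [] : (i < m)%N by lia.
Qed.

Let A_next k := (1 + 'X) * (A k + alpha k) + 'X * (B k + beta k + beta k).
Let B_next k := \sum_(k <= i < m - k) W i - A k.

Lemma B_next_mid j : (2 * j).+1 = m -> B_next j = 0.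
Proof.
move=> hm; have /hWAB [_ _ _ B_mid _] : (j < m)%N by lia.
rewrite /B_next (_ : m - j = j.+1)%N; last by lia.
by rewrite big_nat1 balanced_low ?B_mid ?addr0 ?subrr //; lia.
Qed.

Lemma gamma_pos_B_next k : ((2 * k).+1 <= m)%N -> gamma_pos c (B_next k).
Proof.
move=> hk; have /hWAB [gA gB _ _ _] : (k < m)%N by lia.
case: (ltngtP (2 * k).+1 m) => hm; [| lia | by rewrite B_next_mid //; apply: gamma_pos0].
rewrite /B_next big_ltn; last by lia.
have -> : (m - k = (m.-1 - k).+1)%N by lia.
rewrite big_nat_recr /=; last by lia.
rewrite balanced_low ?balanced_high; [|lia|lia].
set M := \sum_(_ <= _ < _) _.
have -> : A k + B k + (M + (A k + 'X * B k)) - A k = A k + (1 + 'X) * B k + M by ring.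
apply: gamma_posD; first by apply: gamma_posD => //; apply: gamma_pos_pred_mul1X.
by apply: gamma_pos_sum_sym; lia.
Qed.

Lemma next_slice_low j : ((2 * j).+1 <= m)%N ->
  next_slice m W j = A_next j + B_next j.
Proof.
move=> hj; rewrite /next_slice /A_next /B_next.
rewrite (@big_cat_nat _ _ _ (m - j)) /=; [|lia|lia].
rewrite sum_suffix // big_nat_recr //= sum_prefix // balanced_low //.
set M := \sum_(_ <= _ < _) _; ring.
Qed.

Lemma next_slice_high k : ((2 * k).+1 < m)%N ->
  next_slice m W (m.-1 - k) = A_next k + 'X * B_next k.
Proof.
move=> hk; rewrite /next_slice /A_next /B_next.
rewrite big_ltn; last by lia.
have -> : (m.-1 - k).+1 = (m - k)%N by lia.
rewrite sum_suffix; last by lia.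
rewrite (@big_cat_nat _ _ _ k) /=; [|lia|lia].
rewrite sum_prefix ?balanced_high //; last by lia.
set M := \sum_(_ <= _ < _) _; ring.
Qed.

Lemma balanced_decomp_next : balanced_decomp m c.+1 (next_slice m W)
  (fun j => A_next (minn j (m.-1 - j))) (fun j => B_next (minn j (m.-1 - j))).
Proof.
move=> j hj; set k := minn j (m.-1 - j).
have hk : ((2 * k).+1 <= m)%N by rewrite /k; lia.
have /hWAB [gA gB _ _ _] : (k < m)%N by lia.
have -> : minn (m.-1 - j) (m.-1 - (m.-1 - j)) = k by rewrite /k; lia.
split => //.
- apply: gamma_posD.
    by apply: gamma_pos_mul1X; apply: gamma_posD => //; apply: gamma_pos_alpha; lia.
  apply: gamma_pos_pred_mulX.
  by apply: gamma_pos_predD; first apply: gamma_pos_predD => //; apply: gamma_pos_pred_beta; lia.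
- exact: gamma_pos_B_next.
- by move=> hm; rewrite (_ : k = j) ?B_next_mid // /k; lia.
case: (ltngtP (2 * j).+1 m) => hjm.
- by rewrite (_ : k = j) ?next_slice_low // /k; lia.
- rewrite {1}(_ : j = m.-1 - k)%N ?next_slice_high //; rewrite /k; lia.
- by rewrite (_ : k = j) ?next_slice_low ?B_next_mid ?mulr0 // /k; lia.
Qed.

End BalancedStep.

Lemma balanced_next m c W : balanced m c W -> balanced m c.+1 (next_slice m W).
Proof. by move=> [A [B hWAB]]; do 2 eexists; apply: balanced_decomp_next hWAB. Qed.

Section Digits.
Local Open Scope nat_scope.

Lemma divn_unique m d q e : e < d -> m = q * d + e -> m %/ d = q.
Proof. by move=> lt_ed ->; rewrite divnMDl ?divn_small ?addn0 //; apply: leq_ltn_trans lt_ed. Qed.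

Variable r : nat.
Hypothesis r_ge2 : 2 <= r.

Definition weight j := r.-1 * r ^ j.
Definition coord_quot n k j := k * weight j %/ r ^ n.
Definition height n k := k - \sum_(j < n) coord_quot n k j.
Definition slice n k := coord_quot n k 0.

Lemma expn_r_gt0 n : 0 < r ^ n.
Proof. by rewrite expn_gt0; case: r r_ge2. Qed.

Lemma sum_weight n : \sum_(j < n) weight j = r ^ n - 1.
Proof. by rewrite /weight -big_distrr /= -predn_exp subn1. Qed.

Lemma sliceE n k : slice n k = k * r.-1 %/ r ^ n.
Proof. by rewrite /slice /coord_quot /weight expn0 muln1. Qed.

Lemma sum_coord_quot_le n k : \sum_(j < n) coord_quot n k j <= k.
Proof.
rewrite -(@leq_pmul2r (r ^ n)) ?expn_r_gt0 // big_distrl /=.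
apply: (@leq_trans (\sum_(j < n) k * weight j)).
  by apply: leq_sum => j _; rewrite leq_divM.
by rewrite -big_distrr sum_weight leq_mul2l leq_subr orbT.
Qed.

Lemma slice_lt n a : a < r ^ n -> slice n a < r.-1.
Proof.
by move=> lt_a; rewrite sliceE ltn_divLR ?expn_r_gt0 // mulnC ltn_pmul2l //; lia.
Qed.

(* Writing a (r-1) = s r^n + e, the numerator is (s + d (r-1)) r^n + e, and
   s + d (r-1) lies in [d r, d r + r) when d <= s and in [(d-1) r, d r) otherwise. *)
Lemma sliceS n a d : a < r ^ n -> d < r ->
  slice n.+1 (a + d * r ^ n) = if d <= slice n a then d else d.-1.
Proof.
move=> lt_a lt_d; have R_gt0 := expn_r_gt0 n; have s_lt := slice_lt lt_a.
rewrite !sliceE in s_lt *; rewrite expnSr.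
have e_lt := ltn_pmod (a * r.-1) R_gt0; have a_eq := divn_eq (a * r.-1) (r ^ n).
move: ((a * r.-1) %/ r ^ n) ((a * r.-1) %% r ^ n) s_lt a_eq e_lt => s e s_lt a_eq e_lt.
move: (r ^ n) R_gt0 lt_a e_lt a_eq => R R_gt0 lt_a e_lt a_eq.
have Er : r = r.-1.+1 by lia.
move: (r.-1) s_lt a_eq Er => p s_lt a_eq Er; rewrite Er in lt_d *.
case: leqP => le_ds.
  have [u Eu] : exists u, s = d + u by exists (s - d); lia.
  subst s; apply: (@divn_unique _ _ _ (u * R + e)); last by nia.
  have : u.+1 * R <= p * R by rewrite leq_mul2r; apply/orP; right; lia.
  nia.
have [v Ev] : exists v, d = s.+1 + v by exists (d - s.+1); lia.
have [w Ew] : exists w, p = v + w by exists (p - v); lia.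
subst d p; apply: (@divn_unique _ _ _ (w * R + e)); last by simpl; nia.
have : w * R <= (v + w) * R by rewrite leq_mul2r; apply/orP; right; lia.
nia.
Qed.

Lemma coord_quotS n a d j :
  coord_quot n.+1 (a + d * r ^ n) j.+1 = coord_quot n a j + d * weight j.
Proof.
rewrite /coord_quot expnSr.
have -> : (a + d * r ^ n) * weight j.+1 = (a * weight j + d * weight j * r ^ n) * r.
  by rewrite /weight expnSr; ring.
by rewrite divnMr ?divnDMl ?expn_r_gt0 //; case: r r_ge2.
Qed.

Lemma heightS n a d : a < r ^ n -> d < r ->
  height n.+1 (a + d * r ^ n) = height n a + (d - slice n.+1 (a + d * r ^ n)).
Proof.
move=> lt_a lt_d; rewrite /height big_ord_recl -/(slice _ _).
have -> : \sum_(i < n) coord_quot n.+1 (a + d * r ^ n) (lift ord0 i) =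
          \sum_(i < n) coord_quot n a i + d * (r ^ n - 1).
  rewrite -sum_weight big_distrr -big_split /=.
  by apply: eq_bigr => i _; rewrite /bump /= add1n coord_quotS.
have le_s : slice n.+1 (a + d * r ^ n) <= d by rewrite sliceS //; case: ifP; lia.
have := sum_coord_quot_le n a; have := expn_r_gt0 n.
move: (slice _ _) le_s => s le_s; move: (\sum_(i < n) _) (r ^ n) lt_a => Q R lt_a.
nia.
Qed.

End Digits.

Lemma sum_nat_eq_if (V : nmodType) (v : V) x lo hi :
  \sum_(lo <= s < hi) (if x == s then v else 0) = if (lo <= x < hi)%N then v else 0.
Proof. by rewrite -big_mkcond (eq_bigl (eq_op^~ x)) ?big_nat1_eq // => s; exact: eq_sym. Qed.

Lemma sum_nat_mul (V : nmodType) (F : nat -> V) R p :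
  \sum_(0%N <= k < R * p) F k = \sum_(0%N <= d < p) \sum_(0%N <= a < R) F (a + d * R)%N.
Proof.
rewrite mulnC big_nat_mul; apply: eq_bigr => d _.
by rewrite -{1}(add0n (d * R)%N) big_addn mulSn addnK.
Qed.

Section SlicePolynomials.
Variable r : nat.
Hypothesis r_ge2 : (2 <= r)%N.

Definition slice_poly n t : {poly rat} := \sum_(0%N <= k < r ^ n)
  (if ~~ (r %| k)%N && (slice r n k == t) then 'X^(height r n k) else 0).

Lemma sum_slice_poly n lo hi : \sum_(lo <= t < hi) slice_poly n t =
  \sum_(0%N <= k < r ^ n)
    (if ~~ (r %| k)%N && (lo <= slice r n k < hi)%N then 'X^(height r n k) else 0).
Proof.
rewrite exchange_big_nat; apply: eq_bigr => k _.
by case: (r %| k)%N => /=; [rewrite big1 | rewrite sum_nat_eq_if].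
Qed.

(* Contribution of the leading digit d of k = a + d r^n, where s and h are the
   slice and height of a (see [sliceS] and [heightS]). *)
Lemma sum_next_digit (h s t : nat) : (s < r.-1)%N -> (t < r.-1)%N ->
  \sum_(0%N <= d < r) (if (if (d <= s)%N then d else d.-1) == t
       then 'X^(h + (d - (if (d <= s)%N then d else d.-1))) else 0 : {poly rat})
  = (if (t <= s)%N then 'X^h else 0) + (if (s <= t)%N then 'X^(h.+1) else 0).
Proof.
move=> lt_s lt_t; rewrite (@big_cat_nat _ _ _ s.+1) //=; last by lia.
congr (_ + _).
  rewrite (@eq_big_nat _ _ _ _ _ _ (fun d => if t == d then 'X^h else 0)).
    by rewrite sum_nat_eq_if ltnS.
  by move=> d /andP [_]; rewrite ltnS => ->; rewrite subnn addn0 eq_sym.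
rewrite (@eq_big_nat _ _ _ _ _ _ (fun d => if t.+1 == d then 'X^(h.+1) else 0)).
  by rewrite sum_nat_eq_if ltnS (_ : (t.+1 < r)%N) ?andbT //; lia.
move=> d /andP [lt_sd _]; rewrite leqNgt lt_sd /= (_ : d - d.-1 = 1)%N ?addn1; last by lia.
by congr (if _ then _ else _); apply/eqP/eqP; lia.
Qed.

Lemma slice_polyS n t : (1 <= n)%N -> (t < r.-1)%N ->
  slice_poly n.+1 t = next_slice r.-1 (slice_poly n) t.
Proof.
move=> n_gt0 lt_t; rewrite /next_slice !sum_slice_poly {1}/slice_poly expnSr.
rewrite sum_nat_mul exchange_big_nat mulr_sumr -big_split /=.
apply: eq_big_nat => a /andP [_ lt_a]; have lt_s := slice_lt r_ge2 lt_a.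
have dvd_shift d : (r %| a + d * r ^ n)%N = (r %| a)%N.
  by rewrite dvdn_addl // dvdn_mull // -{1}(expn1 r) dvdn_exp2l.
rewrite (@eq_big_nat _ _ _ _ _ _ (fun d => if ~~ (r %| a)%N then
   (if (if (d <= slice r n a)%N then d else d.-1) == t
       then 'X^(height r n a + (d - (if (d <= slice r n a)%N then d else d.-1)))
       else 0) else 0)); last first.
  by move=> d /andP [_ lt_d]; rewrite dvd_shift heightS // sliceS //; case: (r %| a)%N.
case: (r %| a)%N => /=; first by rewrite big1 // mulr0 addr0.
rewrite sum_next_digit // lt_s andbT ltnS.
by congr (_ + _); case: ifP; rewrite ?mulr0 // -exprS.
Qed.

Lemma slice_poly1 t : (t < r.-1)%N -> slice_poly 1 t = 'X.
Proof.
move=> lt_t; rewrite /slice_poly expn1.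
rewrite (@eq_big_nat _ _ _ _ _ _ (fun k => if t.+1 == k then 'X else 0)).
  by rewrite sum_nat_eq_if ifT //; lia.
move=> k /andP [_ lt_k]; case: (posnP k) => [->|k_gt0]; first by rewrite dvdn0.
have -> : (r %| k)%N = false by apply/negP => /dvdn_leq; lia.
have sk : slice r 1 k = k.-1.
  rewrite sliceE expn1; apply: (@divn_unique _ _ _ (r - k)); first by lia.
  by case: r r_ge2 lt_k => // p _; case: k k_gt0 => // u _ lt_u /=; nia.
rewrite sk /height big_ord1 -/(slice r 1 k) sk /= (_ : k - k.-1 = 1)%N; last by lia.
by congr (if _ then _ else _); apply/eqP/eqP; lia.
Qed.

Lemma slice_poly_balanced c : exists W,
  (forall t, (t < r.-1)%N -> slice_poly c.+1 t = 'X * W t) /\ balanced r.-1 c W.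
Proof.
elim: c => [|c [W [slice_W bal_W]]].
  exists (fun=> 1); split; first by move=> t lt_t; rewrite slice_poly1 // mulr1.
  exists (fun=> 1), (fun=> 0) => j _; split => //; first exact: gamma_pos1.
  by rewrite mulr0 if_same addr0.
exists (next_slice r.-1 W); split; last exact: balanced_next.
have sum_W lo hi : (hi <= r.-1)%N ->
    \sum_(lo <= s < hi) slice_poly c.+1 s = 'X * \sum_(lo <= s < hi) W s.
  move=> le_hi; rewrite mulr_sumr; apply: eq_big_nat => s /andP [_ lt_s].
  by apply: slice_W; lia.
by move=> t lt_t; rewrite slice_polyS // /next_slice !sum_W //; ring.
Qed.

Definition lstar_B n : {poly rat} :=
  \sum_(0%N <= k < r ^ n) (if ~~ (r %| k)%N then 'X^(height r n k) else 0).

Lemma gamma_pos_lstar_B n : (1 <= n)%N -> gamma_pos n.+1 (lstar_B n).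
Proof.
case: n => [//|c] _; have [W [slice_W bal_W]] := slice_poly_balanced c.
have -> : lstar_B c.+1 = \sum_(0%N <= t < r.-1) slice_poly c.+1 t.
  rewrite sum_slice_poly; apply: eq_big_nat => k /andP [_ lt_k].
  by rewrite (slice_lt r_ge2 lt_k) leq0n !andbT.
rewrite (@eq_big_nat _ _ _ _ _ _ (fun t => 'X * W t)); last first.
  by move=> t /andP [_ lt_t]; rewrite slice_W.
rewrite -mulr_sumr; apply: gamma_pos_mulX.
by have [A [B hWAB]] := bal_W; apply: (gamma_pos_sum_sym hWAB).
Qed.

End SlicePolynomials.

Lemma int_floor_of_bounds (y : int) (a N : nat) :
  0 < y * N%:Z + a%:Z < N%:Z -> y = - (a %/ N)%N%:Z /\ (0 < a %% N)%N.
Proof.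
move=> /andP [pos lt]; have N_gt0 : (0 < N)%N by rewrite -ltz_nat; lia.
have := ltn_pmod a N_gt0; have := divn_eq a N.
move: (a %/ N)%N (a %% N)%N => q e a_eq e_lt; rewrite a_eq in pos lt.
have y_eq : y = - q%:Z by nia.
by split => //; move: pos; rewrite y_eq; lia.
Qed.

Section Lattice.
Variables r n : nat.
Hypothesis r_ge2 : (2 <= r)%N.

Definition pp_point k : 'rV[int]_n.+1 := \row_(j < n.+1)
  (if unlift ord_max j is Some j' then - (coord_quot r n k j')%:Z else (height r n k)%:Z).

Lemma pp_point_max k : pp_point k 0 ord_max = (height r n k)%:Z.
Proof. by rewrite mxE unlift_none. Qed.

Lemma pp_point_lift k j : pp_point k 0 (lift ord_max j) = - (coord_quot r n k j)%:Z.
Proof. by rewrite mxE liftK. Qed.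

Definition bary_comb (lam : 'I_n.+1 -> rat) : 'rV[rat]_n.+1 :=
  \sum_(i < n.+1) lam i *: map_mx (fun a : int => a%:~R : rat) (lift_pt (Bvert r n i)).

Lemma bary_comb_max lam : bary_comb lam 0 ord_max = \sum_i lam i.
Proof. by rewrite summxE; apply: eq_bigr => i _; rewrite !mxE unlift_none mulr1. Qed.

Lemma bary_comb_lift lam (j : 'I_n) :
  bary_comb lam 0 (lift ord_max j) = - lam ord0 * (weight r j)%:R + lam (lift ord0 j).
Proof.
rewrite summxE big_ord_recl; congr (_ + _).
  by rewrite !mxE liftK mxE eqxx /weight subn1 intrN pmulrn mulrN mulNr.
rewrite (bigD1 j) //= big1 ?addr0; first by rewrite !mxE liftK mxE /= eqxx mulr1.
by move=> i /negbTE ne_ij; rewrite !mxE liftK mxE /= -[bump 0 i]/(i.+1) eqSS val_eqE ne_ij mulr0.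
Qed.

Let N : rat := (r ^ n)%:R.

Lemma N_gt0 : 0 < N.
Proof. by rewrite ltr0n expn_r_gt0. Qed.

Lemma sum_weight_rat : \sum_(j < n) ((weight r j)%:R : rat) = N - 1.
Proof. by rewrite -natr_sum sum_weight natrB ?expn_r_gt0. Qed.

Lemma bary_comb_index lam :
  bary_comb lam 0 ord_max - \sum_(j < n) bary_comb lam 0 (lift ord_max j) = lam ord0 * N.
Proof.
rewrite bary_comb_max (eq_bigr _ (fun j _ => bary_comb_lift lam j)) big_split /= big_ord_recl.
by rewrite -mulr_sumr sum_weight_rat; ring.
Qed.

Lemma weight_modn_gt0 k j : ~~ (r %| k)%N -> (j < n)%N -> (0 < k * weight r j %% r ^ n)%N.
Proof.
move=> ndvd_k lt_j; rewrite lt0n; apply: contra ndvd_k => mod_eq0.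
have dvd_N : (r ^ n %| k * weight r j)%N := mod_eq0.
have : (r ^ (n - j) * r ^ j %| k * r.-1 * r ^ j)%N.
  by rewrite -expnD subnK ?(ltnW lt_j) // -mulnA.
rewrite dvdn_pmul2r ?expn_r_gt0 // => dvd_nj.
have : (r %| k * r.-1)%N.
  by apply: dvdn_trans dvd_nj; rewrite -{1}(expn1 r) dvdn_exp2l //; lia.
by rewrite Gauss_dvdl // coprimenP; case: r r_ge2.
Qed.

Lemma frac_bounds a : (0 < a < r ^ n)%N -> 0 < a%:R / N < 1.
Proof.
case/andP=> a_gt0 lt_a; have N_pos := N_gt0.
rewrite divr_gt0 //=; last by rewrite ltr0n.
by rewrite ltr_pdivrMr // mul1r ltr_nat.
Qed.

Lemma pp_point_in k : (k < r ^ n)%N -> ~~ (r %| k)%N ->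
  in_open_pp (Bvert r n) (pp_point k).
Proof.
move=> lt_k ndvd_k; have k_gt0 : (0 < k)%N by case: k ndvd_k {lt_k}; rewrite ?dvdn0.
have N_neq0 : N != 0 by rewrite gt_eqF ?N_gt0.
pose lam (i : 'I_n.+1) := (if unlift ord0 i is Some j then (k * weight r j %% r ^ n)%N else k)%:R / N.
exists lam; split.
  move=> i; case: (unliftP ord0 i) => [j|] ->; rewrite /lam ?liftK ?unlift_none;
    apply: frac_bounds; last by rewrite k_gt0.
  by rewrite weight_modn_gt0 ?ltn_pmod ?(expn_r_gt0 r_ge2).
have lifted j : bary_comb lam 0 (lift ord_max j) = ((- (coord_quot r n k j)%:Z)%:~R : rat).
  have := divn_eq (k * weight r j) (r ^ n); rewrite -/(coord_quot r n k j).
  move/(congr1 (fun m : nat => m%:R : rat)); rewrite natrD natrM -/N => k_eq.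
  rewrite bary_comb_lift /lam unlift_none liftK intrN -pmulrn.
  have -> : ((k * weight r j %% r ^ n)%N%:R : rat) =
      k%:R * (weight r j)%:R - (coord_quot r n k j)%:R * N.
    by rewrite k_eq natrM -/N; ring.
  by field.
apply/rowP => i; rewrite mxE; case: (unliftP ord_max i) => [j|] ->.
  by rewrite lifted pp_point_lift.
rewrite -(subrK (\sum_(j < n) bary_comb lam 0 (lift ord_max j)) (bary_comb lam 0 ord_max)).
rewrite bary_comb_index (eq_bigr _ (fun j _ => lifted j)) /lam unlift_none mulfVK //.
rewrite pp_point_max /height -!pmulrn natrB ?sum_coord_quot_le // natr_sum.
by rewrite -sumrN; apply: congr1; apply: eq_bigr => j _; rewrite intrN -pmulrn.
Qed.

Lemma pp_point_inj : injective pp_point.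
Proof.
move=> k1 k2 pp_eq.
have q_eq (j : 'I_n) : coord_quot r n k1 j = coord_quot r n k2 j.
  have := congr1 (fun x : 'rV_n.+1 => x 0 (lift ord_max j)) pp_eq.
  by rewrite /= !pp_point_lift => /oppr_inj [].
have := congr1 (fun x : 'rV_n.+1 => x 0 ord_max) pp_eq.
rewrite /= !pp_point_max /height (eq_bigr _ (fun j _ => q_eq j)) => -[].
have := sum_coord_quot_le r_ge2 n k1; have := sum_coord_quot_le r_ge2 n k2.
rewrite (eq_bigr _ (fun j _ => q_eq j)); set Q := \sum_(j < n) _; lia.
Qed.

Lemma modn_weight_last_dvd k : (1 <= n)%N -> (r %| k)%N -> (k * weight r n.-1 %% r ^ n = 0)%N.
Proof.
move=> n_gt0 /dvdnP [k' ->]; rewrite /weight -{2}(prednK n_gt0) expnS.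
by rewrite (_ : k' * r * (r.-1 * r ^ n.-1) = k' * r.-1 * (r * r ^ n.-1))%N ?modnMl //; ring.
Qed.

Lemma in_pp_point x : (1 <= n)%N -> in_open_pp (Bvert r n) x ->
  exists2 k, (k < r ^ n)%N /\ ~~ (r %| k)%N & x = pp_point k.
Proof.
move=> n_gt0 [lam [lam01 x_eq]].
have x_coord i : ((x 0 i)%:~R : rat) = bary_comb lam 0 i by rewrite -[bary_comb _]x_eq mxE.
pose kz := x 0 ord_max - \sum_(j < n) x 0 (lift ord_max j).
have kz_eq : (kz%:~R : rat) = lam ord0 * N.
  by rewrite intrB rmorph_sum x_coord (eq_bigr _ (fun j _ => x_coord _)) bary_comb_index.
have [l0_gt0 l0_lt1] := andP (lam01 ord0); have N_pos := N_gt0.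
have kz_gt0 : 0 < kz by rewrite -(ltr0z rat) kz_eq mulr_gt0.
have kz_lt : kz < (r ^ n)%N by rewrite -(ltr_int rat) kz_eq -pmulrn gtr_pMl.
pose k := `|kz|%N; have kz_k : kz = k%:Z by rewrite /k gez0_abs // ltW.
have coords (j : 'I_n) : x 0 (lift ord_max j) = - (coord_quot r n k j)%:Z /\
                (0 < k * weight r j %% r ^ n)%N.
  have [lj_gt0 lj_lt1] := andP (lam01 (lift ord0 j)).
  have e_eq : ((x 0 (lift ord_max j) * (r ^ n)%N%:Z + (k * weight r j)%N%:Z)%:~R : rat)
      = N * lam (lift ord0 j).
    rewrite intrD !intrM x_coord -!pmulrn [(k * _)%:R]natrM bary_comb_lift -/N.
    have -> : (k%:R : rat) = lam ord0 * N by rewrite -kz_eq kz_k pmulrn.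
    ring.
  apply: int_floor_of_bounds; apply/andP; split.
    by rewrite -(ltr0z rat) e_eq mulr_gt0.
  by rewrite -(ltr_int rat) e_eq -pmulrn -/N gtr_pMr.
exists k; first split.
- by rewrite -ltz_nat -kz_k.
- have lt_last : (n.-1 < n)%N by rewrite prednK.
  apply/negP => /(modn_weight_last_dvd n_gt0) mod0.
  by have := proj2 (coords (Ordinal lt_last)); rewrite /= mod0.
apply/rowP => i; case: (unliftP ord_max i) => [j|] ->.
  by rewrite pp_point_lift (proj1 (coords j)).
rewrite pp_point_max -(subrK (\sum_(j < n) x 0 (lift ord_max j)) (x 0 ord_max)) -/kz kz_k.
rewrite (eq_bigr _ (fun j _ => proj1 (coords j))) sumrN /height.
rewrite -subzn ?sum_coord_quot_le //; congr (_ - _).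
by rewrite -[RHS]natz natr_sum; apply: eq_bigr => j _; rewrite natz.
Qed.

Definition pp_points : seq 'rV[int]_n.+1 :=
  [seq pp_point k | k <- iota 0 (r ^ n) & ~~ (r %| k)%N].

Lemma lstar_is_B : (1 <= n)%N -> lstar_is (Bvert r n) (lstar_B r n).
Proof.
move=> n_gt0; exists pp_points; split.
- by rewrite map_inj_uniq ?filter_uniq ?iota_uniq //; apply: pp_point_inj.
- move=> x; split.
    case/mapP => k; rewrite mem_filter mem_iota add0n => /andP [ndvd_k lt_k] ->.
    exact: pp_point_in.
  case/(in_pp_point n_gt0) => k [lt_k ndvd_k] ->.
  by apply: map_f; rewrite mem_filter mem_iota ndvd_k.
- by move=> x /mapP [k _ ->]; rewrite pp_point_max.
rewrite big_map big_filter [RHS]big_mkcond /lstar_B /index_iota subn0.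
by apply: eq_bigr => k _; rewrite pp_point_max.
Qed.

End Lattice.

Lemma lstar_is_unique n d (V : 'I_d.+1 -> 'rV[int]_n) p q :
  lstar_is V p -> lstar_is V q -> p = q.
Proof.
move=> [s [s_uniq s_mem _ ->]] [t [t_uniq t_mem _ ->]]; apply: perm_big.
by apply: uniq_perm => // x; apply/idP/idP => [/s_mem/t_mem | /t_mem/s_mem].
Qed.

Lemma gamma_nonnegP n p : gamma_pos n.+1 p -> gamma_nonneg n p.
Proof. by move=> [g [g_ge0 ->]]; exists (fun i => g i). Qed.

Theorem corollary4p4 (r n : nat) (hr : (2 <= r)%N) (hn : (1 <= n)%N) :
  (exists p : {poly rat}, lstar_is (Bvert r n) p) /\
  (forall p : {poly rat}, lstar_is (Bvert r n) p -> gamma_nonneg n p).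
Proof.
have lstar_B_is := lstar_is_B hr hn.
split; first by exists (lstar_B r n).
move=> p /(lstar_is_unique lstar_B_is) <-.
exact/gamma_nonnegP/gamma_pos_lstar_B.
Qed.
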